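(* Let $n,m\ge0$ be integers, $d_1,\ldots,d_m$ positive integers, and $g_\bullet=|n;d_1,\ldots,d_m|$. (1) If $n\ge1$, then $|n;d_1,\ldots,d_m,1|=|n-1;d_1,\ldots,d_m|$. (2) For a positive integer $s$, if $h_\bullet=|n;d_1,\ldots,d_m,s|$, then with $g_j=0$ for $j<0$ and $t=\min\{d\ge0: g_d\le g_{d-s}\}$, one has $h_d=g_d-g_{d-s}>0$ for $d<t$ and $h_d=0$ for $d\ge t$. (3) If $n\ge1$, then $g^{(1)}_\bullet=|n-1;d_1,\ldots,d_m|$ if and only if $g_d\le g_{d-1}$ for all $d\ge r_0(g_\bullet)$.
   Context: For $P=\sum_{i\ge0}p_iz^i\in\mathbb{Z}[[z]]$ let $t=\min\{d:p_d\le0\}$ and $|P|=\sum q_iz^i$ with $q_i=p_i$ for $i<t$ and $q_i=0$ for $i\ge t$. For integers $n,m\ge0$ and positive integers $d_1,\ldots,d_m$, the Fröberg sequence $|n;d_1,\ldots,d_m|$ is the sequence $(h_0,h_1,\ldots)$ with $\sum h_iz^i=\left|\prod_{j=1}^m(1-z^{d_j})/(1-z)^n\right|$. For a sequence $g_\bullet$ with $g_0=1$, $g^{(1)}_\bullet$ is defined by $g^{(1)}_0=1$ and $g^{(1)}_d=\max\{0,g_d-g_{d-1}\}$ for $d\ge1$, and $r_0(g_\bullet)=\min\{d\ge1:g_d\le g_{d-1}\}$ ($\infty$ if none). *)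

(* Formal power series in Z[[z]] are represented by their
   coefficient sequences nat -> int. *)
From mathcomp Require Import all_boot all_order all_algebra.
Set Implicit Arguments. Unset Strict Implicit. Unset Printing Implicit Defensive.
Import Order.TTheory GRing.Theory Num.Theory.
Local Open Scope ring_scope.

Definition series := nat -> int.

(* coefficients of P * (1 - z^d) *)
Definition mul_1mz (d : nat) (P : series) : series :=
  fun k => P k - (if (d <= k)%N then P (k - d)%N else 0).

(* coefficients of P / (1 - z) = P * (1 + z + z^2 + ...) *)
Definition div_1mz (P : series) : series :=
  fun k => \sum_(i < k.+1) P i.

Definition one_series : series := fun k => if k == 0%N then 1 else 0.

(* coefficients of prod_{d in ds} (1 - z^d) / (1 - z)^n *)
Definition frob_series (n : nat) (ds : seq nat) : series :=
  iter n div_1mz (foldr mul_1mz one_series ds).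

(* |P| : q_i = p_i for i < t, 0 for i >= t, where t = min {d : p_d <= 0};
   "i < t" unfolds to "p_j > 0 for all j <= i". *)
Definition trunc (P : series) : series :=
  fun i => if [forall j : 'I_i.+1, 0 < P j] then P i else 0.

Definition froberg (n : nat) (ds : seq nat) : series :=
  trunc (frob_series n ds).

Definition first_diff (g : series) : series :=
  fun d => if d == 0%N then 1 else Num.max 0 (g d - g d.-1).

(* "d >= r_0(g)" where r_0(g) = min {e >= 1 : g_e <= g_{e-1}} (infinite if none):
   unfolds to the existence of such an e with e <= d. *)
Definition ge_r0 (g : series) (d : nat) : Prop :=
  exists e : nat, (0 < e)%N /\ (e <= d)%N /\ g e <= g e.-1.

(* g shifted by s with g_j = 0 for j < 0 : the value g_{d-s} *)
Definition shifted (g : series) (s d : nat) : int :=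
  if (s <= d)%N then g (d - s)%N else 0.

From mathcomp Require Import all_boot all_order all_algebra.
From mathcomp Require Import zify ring lra.
From Stdlib Require Import FunctionalExtensionality.
Import Order.TTheory GRing.Theory Num.Theory.
Local Open Scope ring_scope.

(* All three parts compare the truncation of a series with that of a simple
   transform of it, multiplication by 1 - z^s or division by 1 - z.  On the
   initial segment where the original series is positive both truncations are
   the series themselves, and the transform is read off coefficientwise:
   multiplying by 1 - z^s subtracts the s-shift, and multiplying back by 1 - z
   takes first differences.  Beyond that segment both truncations vanish. *)

Variant trunc_spec (P : series) (i : nat) : int -> Prop :=
  | TruncPos of (forall j, (j <= i)%N -> 0 < P j) : trunc_spec P i (P i)
  | TruncNpos j of (j <= i)%N & P j <= 0 : trunc_spec P i 0.

Lemma truncP (P : series) i : trunc_spec P i (trunc P i).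
Proof.
rewrite /trunc; case: ifPn => [/forallP Ppos | ].
  by constructor=> j le_ji; apply: (Ppos (Ordinal (le_ji : (j < i.+1)%N))).
rewrite negb_forall => /existsP [j]; rewrite -leNgt => Pj_le0.
by apply: (@TruncNpos _ _ j); rewrite // -ltnS.
Qed.

Lemma trunc_id (P : series) i : (forall j, (j <= i)%N -> 0 < P j) -> trunc P i = P i.
Proof. by case: truncP => // j le_ji + /(_ j le_ji); rewrite leNgt => /negP. Qed.

Lemma trunc_eq0 (P : series) i j : (j <= i)%N -> P j <= 0 -> trunc P i = 0.
Proof. by case: truncP => // /(_ j) Ppos /Ppos; rewrite leNgt => ->. Qed.

Lemma trunc_ge0 (P : series) i : 0 <= trunc P i.
Proof. by case: truncP => // /(_ i (leqnn i)) /ltW. Qed.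

Lemma trunc_gt0_prefix (P : series) i :
  0 < trunc P i -> forall j, (j <= i)%N -> 0 < P j.
Proof. by case: truncP => // _ _; rewrite ltxx. Qed.

Lemma div_1mz0 (P : series) : div_1mz P 0 = P 0%N.
Proof. by rewrite /div_1mz big_ord_recr big_ord0 /= add0r. Qed.

Lemma div_1mzS (P : series) k : div_1mz P k.+1 = div_1mz P k + P k.+1.
Proof. by rewrite /div_1mz big_ord_recr. Qed.

Lemma div_1mz_gt0 (P : series) k :
  (forall j, (j <= k)%N -> 0 < P j) -> 0 < div_1mz P k.
Proof.
elim: k => [|k IHk] Ppos; first by rewrite div_1mz0 Ppos.
rewrite div_1mzS ltr_wpDl ?Ppos // ltW // IHk // => j le_jk.
by rewrite Ppos // ltnW.
Qed.

Lemma mul_1mzC d e (P : series) :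
  mul_1mz d (mul_1mz e P) = mul_1mz e (mul_1mz d P).
Proof.
apply: functional_extensionality => k; rewrite /mul_1mz -!subnDA (addnC e d).
by case: (leqP d k) => ?; case: (leqP e k) => ?; case: (leqP e (k - d)) => ?;
  case: (leqP d (k - e)) => ?; try lia; ring.
Qed.

Lemma div_1mz_mul_1mz s (P : series) :
  div_1mz (mul_1mz s P) = mul_1mz s (div_1mz P).
Proof.
apply: functional_extensionality; rewrite /mul_1mz.
elim=> [|k IHk]; first by rewrite !div_1mz0; case: s.
rewrite !div_1mzS IHk; case: (ltngtP k.+1 s) => [lt_ks | lt_sk | <-].
- by rewrite !ifN -?ltnNge //; [ring | lia].
- have le_sk : (s <= k)%N by rewrite -ltnS.
  by rewrite le_sk subSn // div_1mzS; ring.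
- by rewrite ifF ?ltnn // subnn div_1mz0; ring.
Qed.

Lemma mul_1mz1_div_1mz (P : series) : mul_1mz 1 (div_1mz P) = P.
Proof.
apply: functional_extensionality; rewrite /mul_1mz => -[|k] /=.
  by rewrite div_1mz0 subr0.
by rewrite subn1 /= div_1mzS addrC addKr.
Qed.

Lemma frob_seriesS n ds : frob_series n.+1 ds = div_1mz (frob_series n ds).
Proof. exact: iterS. Qed.

Lemma frob_series_rcons n ds s :
  frob_series n (rcons ds s) = mul_1mz s (frob_series n ds).
Proof.
elim: n => [|n IHn]; last by rewrite !frob_seriesS IHn div_1mz_mul_1mz.
by rewrite /frob_series /=; elim: ds => //= d ds ->; apply: mul_1mzC.
Qed.

Lemma frob_series0 n ds : all (fun d => 0 < d)%N ds -> frob_series n ds 0%N = 1.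
Proof.
move=> ds_gt0; elim: n => [|n IHn]; last by rewrite frob_seriesS div_1mz0.
rewrite /frob_series /=; elim: ds ds_gt0 => //= d ds IHds /andP [d_gt0 ds_gt0].
by rewrite /mul_1mz IHds // leqNgt d_gt0 subr0.
Qed.

Section TruncMul1mz.

Variables (s : nat) (F : series).
Hypothesis s_gt0 : (0 < s)%N.

Local Notation g := (trunc F).

Lemma mul_1mzE_trunc d : (forall j, (j <= d)%N -> 0 < F j) ->
  mul_1mz s F d = g d - shifted g s d.
Proof.
move=> Fpos; rewrite /mul_1mz /shifted trunc_id //.
by case: ifP => // le_sd; rewrite trunc_id // => j le_j; rewrite Fpos //; lia.
Qed.

Lemma mul_1mz_gt0_prefix d : (forall j, (j <= d)%N -> 0 < mul_1mz s F j) ->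
  forall j, (j <= d)%N -> 0 < F j.
Proof.
move=> Gpos; elim/ltn_ind=> j IHj le_jd; have := Gpos j le_jd.
rewrite /mul_1mz; case: ifP => [le_sj | _]; last by rewrite subr0.
by have := IHj (j - s)%N ltac:(lia) ltac:(lia); lra.
Qed.

Lemma trunc_mul_1mz_gt0 d : (forall e, (e <= d)%N -> shifted g s e < g e) ->
  trunc (mul_1mz s F) d = g d - shifted g s d /\ 0 < trunc (mul_1mz s F) d.
Proof.
move=> shift_lt.
have Fpos j : (j <= d)%N -> 0 < F j.
  move=> le_jd; apply: (@trunc_gt0_prefix _ j) => //.
  have := shift_lt j le_jd; rewrite /shifted.
  by case: ifP => // _; have := trunc_ge0 F (j - s); lra.
have Gpos j : (j <= d)%N -> 0 < mul_1mz s F j.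
  move=> le_jd; rewrite mul_1mzE_trunc ?subr_gt0 ?shift_lt // => i le_ij.
  by rewrite Fpos //; lia.
by rewrite trunc_id // mul_1mzE_trunc // -mul_1mzE_trunc // Gpos.
Qed.

Lemma trunc_mul_1mz_eq0 d : (exists e, (e <= d)%N /\ g e <= shifted g s e) ->
  trunc (mul_1mz s F) d = 0.
Proof.
move=> [e [le_ed shift_ge]]; case: truncP => // Gpos.
have := Gpos e le_ed; rewrite mul_1mzE_trunc; first lra.
by move=> j le_je; apply: (@mul_1mz_gt0_prefix d Gpos); lia.
Qed.

End TruncMul1mz.

Lemma ge_r0P (g : series) d :
  reflect (ge_r0 g d) [exists e : 'I_d.+1, (0 < e)%N && (g e <= g e.-1)].
Proof.
apply: (iffP existsP) => [[e /andP [e_gt0 g_le]] | [e [e_gt0 [le_ed g_le]]]].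
  by exists e; rewrite e_gt0 g_le -ltnS ltn_ord.
by exists (Ordinal (le_ed : (e < d.+1)%N)); rewrite e_gt0.
Qed.

Section TruncDiv1mz.

Variable F : series.

Local Notation g := (trunc (div_1mz F)).

Lemma trunc_eq0_ge_r0 d : ge_r0 g d -> trunc F d = 0.
Proof.
move=> [e [e_gt0 [le_ed]]]; case: (truncP (div_1mz F) e) => [div_pos | j le_je].
  rewrite trunc_id => [g_le|j le_j]; last by rewrite div_pos //; lia.
  apply: (@trunc_eq0 _ _ e) => //; move: g_le e_gt0.
  by case: e {le_ed div_pos} => // e; rewrite div_1mzS /=; lra.
case: (truncP F j) => [/div_1mz_gt0 | i le_ij Fi_le0]; first lra.
by move=> _ _; apply: (@trunc_eq0 _ _ i) => //; lia.
Qed.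

Hypothesis F0 : F 0%N = 1.

Lemma first_diff_trunc_div_1mz d :
  (forall e, (0 < e)%N -> (e <= d)%N -> g e.-1 < g e) ->
  first_diff g d = trunc F d.
Proof.
move=> g_lt.
have div_pos : forall j, (j <= d)%N -> 0 < div_1mz F j.
  apply: trunc_gt0_prefix; case: d g_lt => [_ | d g_lt].
    by rewrite trunc_id => [|j /[!leqn0] /eqP ->]; rewrite div_1mz0 F0.
  by have := g_lt d.+1 isT (leqnn _); have := trunc_ge0 (div_1mz F) d; lra.
have gE j : (j <= d)%N -> g j = div_1mz F j.
  by move=> le_jd; rewrite trunc_id // => i le_ij; rewrite div_pos //; lia.
have F_diff k : (k < d)%N -> F k.+1 = g k.+1 - g k.
  by move=> lt_kd; rewrite (gE _ lt_kd) (gE _ (ltnW lt_kd)) div_1mzS addrC addKr.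
rewrite trunc_id => [|[|k] le_kd]; last 2 first.
- by rewrite F0.
- by rewrite F_diff // subr_gt0 (g_lt k.+1).
rewrite /first_diff; case: d {div_pos gE} g_lt F_diff => [|d] g_lt F_diff //=.
by rewrite maxEle subr_ge0 ltW ?(g_lt d.+1) ?F_diff.
Qed.

Lemma first_diff_trunc_div_1mzE d :
  first_diff g d = trunc F d <-> (ge_r0 g d -> g d <= g d.-1).
Proof.
case: (ge_r0P g d) => [r0_le | not_r0]; last first.
  split=> // _; apply: first_diff_trunc_div_1mz => e e_gt0 le_ed.
  by rewrite ltNge; apply/negP => g_le; apply: not_r0; exists e.
rewrite trunc_eq0_ge_r0 //; have [e [e_gt0 [le_ed _]]] := r0_le.
rewrite /first_diff ifN ?lt0n_neq0 ?(leq_trans e_gt0) // maxEle subr_ge0.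
case: leP => [g_le | /ltW g_le]; last by split.
by split=> [+ _ | /(_ r0_le)]; lra.
Qed.

End TruncDiv1mz.

Theorem lemma4p3 (n : nat) (ds : seq nat) (hds : all (fun d => 0 < d)%N ds) :
  let g := froberg n ds in
  (* (1) *)
  ((0 < n)%N -> forall d, froberg n (rcons ds 1%N) d = froberg n.-1 ds d) /\
  (* (2) *)
  (forall s : nat, (0 < s)%N ->
     let h := froberg n (rcons ds s) in
     forall d : nat,
       ((forall e : nat, (e <= d)%N -> shifted g s e < g e) ->
          h d = g d - shifted g s d /\ 0 < h d) /\
       ((exists e : nat, (e <= d)%N /\ g e <= shifted g s e) -> h d = 0)) /\
  (* (3) *)
  ((0 < n)%N ->
     ((forall d, first_diff g d = froberg n.-1 ds d) <->
      (forall d : nat, ge_r0 g d -> g d <= g d.-1))).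
Proof.
rewrite /froberg; split; [|split].
- by case: n => // n _ d; rewrite frob_series_rcons frob_seriesS mul_1mz1_div_1mz.
- move=> s s_gt0 d; rewrite frob_series_rcons.
  by split; [apply: trunc_mul_1mz_gt0 | apply: trunc_mul_1mz_eq0].
- case: n => // n _ /=.
  have F0 := frob_series0 n ds hds.
  by split=> H d; apply/(first_diff_trunc_div_1mzE _ F0 d)/H.
Qed.
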